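(* Consider a bipartite experiment where Alice chooses $x\in\{0,1\}$ and obtains $a\in\{\pm1\}$ with probability $\pi_{a|x}:=p(a|x)$, and conditioned on $(a,x)$ Bob's system is in the pure qubit state $\rho_{a|x}=|\psi_{a|x}\rangle\langle\psi_{a|x}|$. Bob chooses $y\in\{0,1\}$ and performs the binary projective measurement with observable $B_y=\mathbf b_y\cdot\boldsymbol\sigma$, $\|\mathbf b_y\|=1$, obtaining $b\in\{\pm1\}$, so that $p(a,b|x,y)=\pi_{a|x}\mathrm{Tr}\big(\rho_{a|x}\tfrac{I+bB_y}{2}\big)$. Let $E_{xy}=\sum_{a,b}ab\,p(a,b|x,y)$ and $S_{\mathrm{CHSH}}=E_{00}+E_{01}+E_{10}-E_{11}$. For each $x$ let $$D_x=\eta_1^2+\eta_2^2+2\eta_1\eta_2\sqrt{1-|\gamma_x|^2}+|\gamma_x|^2(\eta_1\eta_2-\eta_{\min}^2),$$ with $\eta_1=\pi_{+|x}$, $\eta_2=\pi_{-|x}$, $\eta_{\min}=\min\{\eta_1,\eta_2\}$, $\gamma_x=\langle\psi_{+|x}|\psi_{-|x}\rangle$. Then $$S_{\mathrm{CHSH}}\le 2\sqrt{(2D_0-1)^2+(2D_1-1)^2}.$$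
   Context: $\boldsymbol\sigma$ denotes the vector of Pauli matrices. $D_x$ is the fidelity-based discriminability of the conditional two-state ensemble $\{(\pi_{+|x},\rho_{+|x}),(\pi_{-|x},\rho_{-|x})\}$. *)

From mathcomp Require Import all_boot all_order all_algebra.
Set Implicit Arguments. Unset Strict Implicit. Unset Printing Implicit Defensive.
Import Order.TTheory GRing.Theory Num.Theory.
Local Open Scope ring_scope.

Section Qubit.
Variable C : numClosedFieldType.

(* outcome/sign convention: true = +1, false = -1 *)
Definition sgn (b : bool) : C := if b then 1 else -1.

Definition pauliX : 'M[C]_2 := \matrix_(i, j) (if i == j then 0 else 1).
Definition pauliY : 'M[C]_2 :=
  \matrix_(i, j) (if i == j then 0 else if i == 0 then - 'i else 'i).
Definition pauliZ : 'M[C]_2 :=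
  \matrix_(i, j) (if i == j then (if i == 0 then 1 else -1) else 0).

Definition bloch_obs (b : 'rV[C]_3) : 'M[C]_2 :=
  b 0 0 *: pauliX + b 0 1 *: pauliY + b 0 2 *: pauliZ.

Definition adjmx m n (M : 'M[C]_(m, n)) : 'M[C]_(n, m) := (map_mx Num.conj M)^T.

Definition inner (u v : 'cV[C]_2) : C := \sum_i (u i 0)^* * v i 0.

Definition proj (psi : 'cV[C]_2) : 'M[C]_2 := psi *m adjmx psi.

Definition joint_prob (pi : bool -> bool -> C) (psi : bool -> bool -> 'cV[C]_2)
  (bv : bool -> 'rV[C]_3) (a b x y : bool) : C :=
  pi x a * \tr (proj (psi x a) *m (2^-1 *: (1%:M + sgn b *: bloch_obs (bv y)))).

Definition corrE pi psi bv (x y : bool) : C :=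
  \sum_(a : bool) \sum_(b : bool) sgn a * sgn b * joint_prob pi psi bv a b x y.

(* x = 0 is false, x = 1 is true *)
Definition S_CHSH pi psi bv : C :=
  corrE pi psi bv false false + corrE pi psi bv false true
  + corrE pi psi bv true false - corrE pi psi bv true true.

Definition Dx (pi : bool -> bool -> C) (psi : bool -> bool -> 'cV[C]_2) (x : bool) : C :=
  let eta1 := pi x true in
  let eta2 := pi x false in
  let etamin := Num.min eta1 eta2 in
  let g := inner (psi x true) (psi x false) in
  eta1 ^+ 2 + eta2 ^+ 2 + 2 * eta1 * eta2 * sqrtC (1 - `|g| ^+ 2)
  + `|g| ^+ 2 * (eta1 * eta2 - etamin ^+ 2).

End Qubit.

(* Let r_{a|x} be the Bloch vector of psi_{a|x}. Then E_xy = b_y . v_x with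
   v_x = pi_{+|x} r_{+|x} - pi_{-|x} r_{-|x}, so by Cauchy-Schwarz and the
   parallelogram law
     S <= |v_0 + v_1| + |v_0 - v_1| <= sqrt (2 (|v_0 + v_1|^2 + |v_0 - v_1|^2))
        = 2 sqrt (|v_0|^2 + |v_1|^2).
   As r . r' = 2 |<psi|psi'>|^2 - 1 for unit vectors, |v_x|^2 = 1 - 4 pi_{+|x} pi_{-|x} |gamma_x|^2,
   and (2 D_x - 1)^2 minus this quantity factors into nonnegative terms. *)
From mathcomp Require Import all_boot all_order all_algebra ring.
From mathcomp Require Import sesquilinear spectral.
Set Implicit Arguments. Unset Strict Implicit. Unset Printing Implicit Defensive.
Import Order.TTheory GRing.Theory Num.Theory.
Local Open Scope ring_scope.

Lemma sum2E (V : nmodType) (F : 'I_2 -> V) : \sum_i F i = F 0 + F 1.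
Proof. by rewrite !big_ord_recl big_ord0 addr0; congr (_ + F _); apply/val_inj. Qed.

Lemma sum3E (V : nmodType) (F : 'I_3 -> V) : \sum_i F i = F 0 + F 1 + F 2.
Proof.
by rewrite !big_ord_recl big_ord0 addr0 addrA; congr (_ + F _ + F _); apply/val_inj.
Qed.

Lemma dnorm_parallelogram (C : numClosedFieldType) (U : lmodType C)
    (form : {dot U for Num.conj}) (u v : U) :
  form (u + v) (u + v) + form (u - v) (u - v) = 2 * (form u u + form v v).
Proof. by rewrite dnormD dnormB /=; ring. Qed.

Lemma sqrtC_add_le (C : numClosedFieldType) (x y z : C) :
  0 <= x -> 0 <= y -> x + y <= 2 * z -> sqrtC x + sqrtC y <= 2 * sqrtC z.
Proof.
move=> x_ge0 y_ge0 le_xy_z.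
have z_ge0 : 0 <= z.
  by rewrite -(pmulr_rge0 _ (ltr0n _ 2)) (le_trans _ le_xy_z) ?addr_ge0.
rewrite -(ler_pXn2r (_ : 0 < 2)%N) ?nnegrE ?addr_ge0 ?mulr_ge0 ?sqrtC_ge0 // -subr_ge0.
have -> : (2 * sqrtC z) ^+ 2 - (sqrtC x + sqrtC y) ^+ 2
    = 2 * (2 * sqrtC z ^+ 2 - (sqrtC x ^+ 2 + sqrtC y ^+ 2)) + (sqrtC x - sqrtC y) ^+ 2.
  by ring.
rewrite !sqrtCK; apply: addr_ge0; first by rewrite mulr_ge0 ?ler0n ?subr_ge0.
by rewrite real_exprn_even_ge0 // rpredB // sqrtC_real.
Qed.

Section RealDotmx.
Variables (C : numClosedFieldType) (n : nat).
Implicit Types (a c : C) (u v : 'rV[C]_n).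

Lemma realmxB u v : u \is a realmx -> v \is a realmx -> u - v \is a realmx.
Proof.
move=> /mxOverP u_real /mxOverP v_real.
by apply/mxOverP => i j; rewrite !mxE rpredB.
Qed.

Lemma realmx_dotmxE u v : v \is a realmx -> dotmx u v = \sum_i u 0 i * v 0 i.
Proof.
move=> /mxOverP v_real; rewrite dotmxE mxE; apply: eq_bigr => i _.
by rewrite !mxE (CrealP (v_real _ _)).
Qed.

Lemma dotmx_real u v : u \is a realmx -> v \is a realmx -> dotmx u v \is Num.real.
Proof.
move=> /mxOverP u_real v_real; rewrite realmx_dotmxE //.
by apply: rpred_sum => i _; rewrite rpredM // (mxOverP v_real).
Qed.

Lemma dotmx_le_sqrtC u v : u \is a realmx -> v \is a realmx ->
  dotmx v v = 1 -> dotmx u v <= sqrtC (dotmx u u).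
Proof.
move=> u_real v_real v_unit.
apply: le_trans (real_ler_norm (dotmx_real u_real v_real)) _.
have [+ _] := CauchySchwarz_sqrt (@dotmx C n) u v.
by rewrite /= v_unit sqrtC1 mulr1.
Qed.

Lemma dotmx_sqrBZ a c u v :
  a \is Num.real -> c \is Num.real -> u \is a realmx -> v \is a realmx ->
  dotmx (a *: u - c *: v) (a *: u - c *: v)
  = a ^+ 2 * dotmx u u - 2 * a * c * dotmx u v + c ^+ 2 * dotmx v v.
Proof.
move=> a_real c_real u_real v_real.
have w_real : a *: u - c *: v \is a realmx by rewrite realmxB ?mxOverZ.
rewrite !realmx_dotmxE // !mulr_sumr -sumrB -big_split /=.
by apply: eq_bigr => i _; rewrite !mxE; ring.
Qed.

End RealDotmx.

Lemma Dx_poly_ineq (R : numDomainType) (e1 e2 s : R) :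
  0 <= e1 <= e2 -> e1 + e2 = 1 -> 0 <= s <= 1 ->
  1 - 4 * e1 * e2 * (1 - s ^+ 2) <=
  (2 * (e1 ^+ 2 + e2 ^+ 2 + 2 * e1 * e2 * s + (1 - s ^+ 2) * (e1 * e2 - e1 ^+ 2)) - 1) ^+ 2.
Proof.
move=> /andP[e1_ge0 le_e12] e_sum /andP[s_ge0 s_le1].
have e2E : e2 = 1 - e1 by rewrite -e_sum addrC addKr.
have e1_le1 : e1 <= 1 by rewrite -e_sum lerDl (le_trans e1_ge0).
have t_ge0 : 0 <= 1 - s by rewrite subr_ge0.
have e1t_le1 : 0 <= 1 - e1 * (1 - s) by rewrite subr_ge0 mulr_ile1 // lerBlDr lerDl.
rewrite -subr_ge0.
have -> : (2 * (e1 ^+ 2 + e2 ^+ 2 + 2 * e1 * e2 * s + (1 - s ^+ 2) * (e1 * e2 - e1 ^+ 2)) - 1) ^+ 2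
    - (1 - 4 * e1 * e2 * (1 - s ^+ 2))
    = 4 * e1 * (e2 - e1) * (1 - s) * s
      * (2 * (1 - e1 * (1 - s)) + e1 * (1 - s) * (e2 - e1) * s).
  by rewrite e2E; ring.
have d_ge0 : 0 <= e2 - e1 by rewrite subr_ge0.
apply: mulr_ge0; first by rewrite !mulr_ge0 // ler0n.
by rewrite addr_ge0 // !mulr_ge0 // ler0n.
Qed.

Lemma Dx_ineq (C : numClosedFieldType) (e1 e2 c : C) :
  0 <= e1 -> 0 <= e2 -> e1 + e2 = 1 -> 0 <= c <= 1 ->
  1 - 4 * e1 * e2 * c <=
  (2 * (e1 ^+ 2 + e2 ^+ 2 + 2 * e1 * e2 * sqrtC (1 - c)
        + c * (e1 * e2 - Num.min e1 e2 ^+ 2)) - 1) ^+ 2.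
Proof.
move=> e1_ge0 e2_ge0 e_sum /andP[c_ge0 c_le1].
wlog le_e12 : e1 e2 e1_ge0 e2_ge0 e_sum / e1 <= e2.
  move=> ineq; have /orP[le_e12 | le_e21] := real_leVge (ger0_real e1_ge0) (ger0_real e2_ge0).
    exact: ineq.
  have := ineq e2 e1 e2_ge0 e1_ge0 (etrans (addrC e2 e1) e_sum) le_e21.
  rewrite (min_l le_e21) (min_r le_e21) [4 * e2 * e1]mulrAC [2 * e2 * e1]mulrAC.
  by rewrite [e2 * e1]mulrC [e2 ^+ 2 + _]addrC.
set s := sqrtC (1 - c).
have cE : c = 1 - s ^+ 2 by rewrite sqrtCK subKr.
have s_ge0 : 0 <= s by rewrite sqrtC_ge0 subr_ge0.
have s_le1 : s <= 1.
  by rewrite -sqrtC1 ler_sqrtC ?nnegrE ?subr_ge0 // lerBlDr lerDl.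
rewrite (min_l le_e12) cE.
by apply: Dx_poly_ineq => //; apply/andP.
Qed.

Section Qubit.
Variable C : numClosedFieldType.
Implicit Types (p q : 'cV[C]_2) (b : 'rV[C]_3).

Lemma innerE p q : inner p q = (p 0 0)^* * q 0 0 + (p 1 0)^* * q 1 0.
Proof. exact: sum2E. Qed.

Lemma inner_conj p q : (inner p q)^* = inner q p.
Proof. by rewrite !innerE rmorphD !rmorphM /= !conjCK; ring. Qed.

Lemma inner_Lagrange p q :
  inner p p * inner q q - `|inner p q| ^+ 2 = `|p 0 0 * q 1 0 - p 1 0 * q 0 0| ^+ 2.
Proof. by rewrite !normCK inner_conj rmorphB !rmorphM /= !innerE; ring. Qed.

Lemma norm_inner_le1 p q :
  inner p p = 1 -> inner q q = 1 -> `|inner p q| ^+ 2 <= 1.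
Proof.
move=> p_unit q_unit; rewrite -subr_ge0 -[X in X - _]mulr1 -{1}p_unit -{1}q_unit.
by rewrite inner_Lagrange exprn_ge0.
Qed.

(* The Bloch vector (<p|X|p>, <p|Y|p>, <p|Z|p>) of p. *)
Definition bloch p : 'rV[C]_3 :=
  \row_k [:: (p 0 0)^* * p 1 0 + (p 1 0)^* * p 0 0;
             'i * ((p 1 0)^* * p 0 0 - (p 0 0)^* * p 1 0);
             (p 0 0)^* * p 0 0 - (p 1 0)^* * p 1 0]`_k.

Lemma bloch_real p : bloch p \is a realmx.
Proof.
apply/mxOverP => i [[|[|[|//]]] ?]; rewrite mxE /=; apply/CrealP.
- by rewrite rmorphD !rmorphM /= !conjCK; ring.
- by rewrite rmorphM rmorphB !rmorphM /= !conjCK conjCi; ring.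
- by rewrite rmorphB !rmorphM /= !conjCK; ring.
Qed.

Lemma bloch_dotmx p q :
  dotmx (bloch p) (bloch q) = 2 * `|inner p q| ^+ 2 - inner p p * inner q q.
Proof.
rewrite realmx_dotmxE ?bloch_real // sum3E !mxE /=.
(* the two y-components each carry a factor 'i; collect them into 'i ^+ 2 = -1 *)
rewrite mulrACA -expr2 sqrCi.
by rewrite normCK inner_conj !innerE; ring.
Qed.

Lemma mxtrace_proj p : \tr (proj p) = inner p p.
Proof.
by rewrite /proj mxtrace_mulC trace_mx11 mxE; apply: eq_bigr => i _; rewrite !mxE.
Qed.

Lemma mxtrace_proj_bloch_obs p b :
  b \is a realmx -> \tr (proj p *m bloch_obs b) = dotmx (bloch p) b.
Proof.
move=> b_real; rewrite realmx_dotmxE // sum3E /mxtrace sum2E !mxE /=.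
rewrite !sum2E /proj /bloch_obs /adjmx !mxE /=.
by rewrite !big_ord1 !mxE /=; ring.
Qed.

Section Correlations.
Variables (pi : bool -> bool -> C) (psi : bool -> bool -> 'cV[C]_2).
Variable bv : bool -> 'rV[C]_3.
Hypothesis bv_real : forall y, bv y \is a realmx.

Definition steer_vec x : 'rV[C]_3 :=
  pi x true *: bloch (psi x true) - pi x false *: bloch (psi x false).

Lemma joint_probE (a b x y : bool) : joint_prob pi psi bv a b x y
  = pi x a / 2 * (inner (psi x a) (psi x a) + sgn C b * dotmx (bloch (psi x a)) (bv y)).
Proof.
rewrite /joint_prob -scalemxAr mxtraceZ mulmxDr mulmx1 -scalemxAr mxtraceD mxtraceZ.
by rewrite mxtrace_proj mxtrace_proj_bloch_obs // mulrA.
Qed.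

Lemma corrE_steer x y : corrE pi psi bv x y = dotmx (steer_vec x) (bv y).
Proof.
rewrite /corrE !big_bool /= !joint_probE /steer_vec linearBl !linearZl_LR /=.
by rewrite /sgn; field.
Qed.

Lemma S_CHSH_steer : S_CHSH pi psi bv =
  dotmx (steer_vec false + steer_vec true) (bv false)
  + dotmx (steer_vec false - steer_vec true) (bv true).
Proof.
rewrite (linearDl _ _ (steer_vec false)) (linearBl _ _ (steer_vec false)) /=.
by rewrite /S_CHSH !corrE_steer; ring.
Qed.

Hypothesis pi_ge0 : forall x a, 0 <= pi x a.
Hypothesis pi_sum : forall x, pi x true + pi x false = 1.
Hypothesis psi_unit : forall x a, inner (psi x a) (psi x a) = 1.

Lemma steer_vec_real x : steer_vec x \is a realmx.
Proof.
by rewrite realmxB ?mxOverZ ?bloch_real ?(ger0_real (pi_ge0 _ _)).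
Qed.

Lemma dnorm_steer_vec x : dotmx (steer_vec x) (steer_vec x)
  = 1 - 4 * pi x true * pi x false * `|inner (psi x true) (psi x false)| ^+ 2.
Proof.
rewrite dotmx_sqrBZ ?ger0_real ?bloch_real // !bloch_dotmx !psi_unit !normr1.
have -> : pi x false = 1 - pi x true by rewrite -(pi_sum x) addrC addKr.
ring.
Qed.

Lemma dnorm_steer_vec_le x :
  dotmx (steer_vec x) (steer_vec x) <= (2 * Dx pi psi x - 1) ^+ 2.
Proof.
rewrite dnorm_steer_vec /Dx /=; apply: Dx_ineq; rewrite ?pi_sum ?exprn_ge0 //.
exact: norm_inner_le1.
Qed.

End Correlations.
End Qubit.

Theorem corollary1 (C : numClosedFieldType)
  (pi : bool -> bool -> C) (psi : bool -> bool -> 'cV[C]_2) (bv : bool -> 'rV[C]_3) :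
  (forall x a, 0 <= pi x a) ->
  (forall x, pi x true + pi x false = 1) ->
  (forall x a, inner (psi x a) (psi x a) = 1) ->
  (forall y i, bv y 0 i \is Num.real) ->
  (forall y, \sum_(i < 3) bv y 0 i ^+ 2 = 1) ->
  S_CHSH pi psi bv <= 2 * sqrtC ((2 * Dx pi psi false - 1) ^+ 2 + (2 * Dx pi psi true - 1) ^+ 2).
Proof.
move=> pi_ge0 pi_sum psi_unit bv_real bv_unit.
have bv_realmx y : bv y \is a realmx by apply/mxOverP => i j; rewrite ord1.
have bv_dnorm y : dotmx (bv y) (bv y) = 1.
  by rewrite realmx_dotmxE // -(bv_unit y); apply: eq_bigr => i _; rewrite expr2.
have v_real := steer_vec_real psi pi_ge0.
have CS_sum := dotmx_le_sqrtC (realmxD (v_real false) (v_real true))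
  (bv_realmx false) (bv_dnorm false).
have CS_diff := dotmx_le_sqrtC (realmxB (v_real false) (v_real true))
  (bv_realmx true) (bv_dnorm true).
rewrite S_CHSH_steer //; apply: le_trans (lerD CS_sum CS_diff) _.
apply: sqrtC_add_le; rewrite ?dnorm_ge0 // dnorm_parallelogram ler_pM2l ?ltr0n //.
by rewrite lerD // dnorm_steer_vec_le.
Qed.
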